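(* Let $\Lambda$ be an artin algebra, $C$ a $\Lambda$-module, and $f: X\to Y$ a right $C$-determined map. Then $f$ is surjective if and only if $f\cdot\operatorname{Hom}(C,X)\supseteq \operatorname{Hom}(C,\mathcal P,Y)$.
   Context: Modules are finite length left $\Lambda$-modules. $f: X\to Y$ is right $C$-determined if every $f': X'\to Y$ such that $f'\phi$ factors through $f$ for all $\phi: C\to X'$ itself factors through $f$. $\operatorname{Hom}(C,\mathcal P,Y)$ is the set of maps $C\to Y$ which factor through a projective module; $f\cdot \operatorname{Hom}(C,X)$ is the set of maps $C\to Y$ that factor through $f$. *)

From HB Require Import structures.
From mathcomp Require Import all_boot all_order all_algebra.
Set Implicit Arguments. Unset Strict Implicit. Unset Printing Implicit Defensive.
Import GRing.Theory.
Local Open Scope ring_scope.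

Definition is_ideal (k : comPzRingType) (I : k -> Prop) : Prop :=
  [/\ I 0, (forall x y, I x -> I y -> I (x + y)) & (forall a x, I x -> I (a * x))].

Definition artinian_ring (k : comPzRingType) : Prop :=
  forall I : nat -> (k -> Prop), (forall n, is_ideal (I n)) ->
    (forall n x, I n.+1 x -> I n x) ->
    exists N, forall n, (N <= n)%N -> forall x, I N x -> I n x.

Definition fin_gen_over (k : comPzRingType) (L : algType k) : Prop :=
  exists (n : nat) (v : 'I_n -> L), forall x : L,
    exists c : 'I_n -> k, x = \sum_(i < n) c i *: v i.

(* Artin algebra: k commutative artinian, Lambda a k-algebra (k acts
   centrally) finitely generated as a k-module. *)
Definition artin_algebra (k : comPzRingType) (L : algType k) : Prop :=
  artinian_ring k /\ fin_gen_over L.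

Definition is_submodule (L : pzRingType) (M : lmodType L) (S : M -> Prop) : Prop :=
  [/\ S 0, (forall x y, S x -> S y -> S (x + y)) & (forall (a : L) x, S x -> S (a *: x))].

Definition strict_subset (T : Type) (A B : T -> Prop) : Prop :=
  (forall x, A x -> B x) /\ exists x, B x /\ ~ A x.

Definition finite_length (L : pzRingType) (M : lmodType L) : Prop :=
  exists n : nat, forall (m : nat) (S : nat -> (M -> Prop)),
    (forall i, (i <= m)%N -> is_submodule (S i)) ->
    (forall i, (i < m)%N -> strict_subset (S i) (S i.+1)) ->
    (m <= n)%N.

Definition surjective_map (A B : Type) (g : A -> B) : Prop :=
  forall b, exists a, g a = b.

Definition projective_mod (L : pzRingType) (P : lmodType L) : Prop :=
  forall (M N : lmodType L), finite_length M -> finite_length N ->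
    forall (g : {linear M -> N}) (h : {linear P -> N}),
      surjective_map g -> exists l : {linear P -> M}, forall p, g (l p) = h p.

Definition factors_through (L : pzRingType) (C X Y : lmodType L)
  (u : C -> Y) (f : {linear X -> Y}) : Prop :=
  exists h : {linear C -> X}, forall c, f (h c) = u c.

Definition right_determined (L : pzRingType) (C X Y : lmodType L)
  (f : {linear X -> Y}) : Prop :=
  forall (X' : lmodType L), finite_length X' ->
    forall f' : {linear X' -> Y},
      (forall phi : {linear C -> X'}, factors_through (fun c => f' (phi c)) f) ->
      exists h : {linear X' -> X}, forall x, f (h x) = f' x.

(* u : C -> Y belongs to Hom(C, P, Y): it factors through a projective
   (finite length) module. *)
Definition factors_through_projective (L : pzRingType) (C Y : lmodType L)
  (u : {linear C -> Y}) : Prop :=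
  exists (P : lmodType L) (a : {linear C -> P}) (b : {linear P -> Y}),
    [/\ finite_length P, projective_mod P & forall c, b (a c) = u c].

From HB Require Import structures.
From mathcomp Require Import all_boot all_order all_algebra.
From mathcomp Require classical_sets.
From Stdlib Require Import Classical ClassicalEpsilon.
Set Implicit Arguments. Unset Strict Implicit. Unset Printing Implicit Defensive.
Import GRing.Theory.
Local Open Scope ring_scope.

(* Projectivity gives the forward direction: a map C -> P -> Y lifts along the
   epimorphism f through P.  Conversely, for y in Y the map Λ -> Y, a |-> a y,
   composed with any φ : C -> Λ factors through the projective module Λ, hence
   through f; right C-determinacy lifts a |-> a y itself to h : Λ -> X, and
   f (h 1) = y.

   What remains is that Λ has finite length, i.e. that a finitely generated
   module over the commutative artinian ring k does.  Such a module has the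
   descending chain condition, so otherwise it contains a minimal submodule N
   without finite length.  Every c in k then kills N or maps it onto itself, and
   since the ideals c^n k + Ann N stabilise, the latter elements act invertibly:
   N is a vector space over k / Ann N.  A maximal subspace avoiding a nonzero
   vector has finite length by minimality and codimension one, so N has finite
   length after all. *)

Definition chain_bounded (T : Type) (B : (T -> Prop) -> Prop) (n : nat) :=
  forall (m : nat) (S : nat -> (T -> Prop)), (forall i, (i <= m)%N -> B (S i)) ->
    (forall i, (i < m)%N -> strict_subset (S i) (S i.+1)) -> (m <= n)%N.

Definition strict_chain_below (T : Type) (B : (T -> Prop) -> Prop) (j : nat)
    (S : nat -> (T -> Prop)) (Q : T -> Prop) :=
  [/\ forall i, (i <= j)%N -> B (S i),
      forall i, (i < j)%N -> strict_subset (S i) (S i.+1)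
    & forall x, S j x -> Q x].

Lemma strict_chain_below_weaken (T : Type) (B : (T -> Prop) -> Prop) j S Q Q' :
  strict_chain_below B j S Q -> (forall x, Q x -> Q' x) -> strict_chain_below B j S Q'.
Proof. by case=> hB hS hQ QQ'; split=> // x /hQ /QQ'. Qed.

Lemma strict_chain_below_grow (T : Type) (B : (T -> Prop) -> Prop) j S Q Q' :
  strict_chain_below B j S Q -> B Q' -> (forall x, Q x -> Q' x) ->
  (exists x, Q' x /\ ~ Q x) ->
  strict_chain_below B j.+1 (fun i => if (i <= j)%N then S i else Q') Q'.
Proof.
case=> hB hS hQ BQ' QQ' [x [Q'x Qx]]; split.
- by move=> i _; case: ifP => [/hB|].
- move=> i; rewrite ltnS => lei; rewrite lei; case: ifP => [lti|/negbT].
    by apply: hS; rewrite -ltnS.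
  rewrite -ltnNge ltnS => lji; have -> : i = j by apply/eqP; rewrite eqn_leq lei.
  split; first by move=> y /hQ /QQ'.
  by exists x; split=> // /hQ.
- by move=> y; rewrite ltnn.
Qed.

(* Abstract subadditivity of length: typically [p1 A] and [p2 A] are [A :&: H]
   and [A + H], or the kernel and image of a map restricted to [A]. *)
Lemma chain_bounded_split (T T1 T2 : Type) (B : (T -> Prop) -> Prop)
    (B1 : (T1 -> Prop) -> Prop) (B2 : (T2 -> Prop) -> Prop)
    (p1 : (T -> Prop) -> (T1 -> Prop)) (p2 : (T -> Prop) -> (T2 -> Prop)) n1 n2 :
  chain_bounded B1 n1 -> chain_bounded B2 n2 ->
  (forall A, B A -> B1 (p1 A)) -> (forall A, B A -> B2 (p2 A)) ->
  (forall A A', B A -> B A' -> (forall x, A x -> A' x) -> forall y, p1 A y -> p1 A' y) ->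
  (forall A A', B A -> B A' -> (forall x, A x -> A' x) -> forall y, p2 A y -> p2 A' y) ->
  (forall A A', B A -> B A' -> (forall x, A x -> A' x) -> (forall y, p1 A' y -> p1 A y) ->
     (forall y, p2 A' y -> p2 A y) -> forall x, A' x -> A x) ->
  chain_bounded B (n1 + n2).
Proof.
move=> bnd1 bnd2 hB1 hB2 mono1 mono2 reflect_eq m S hS hst.
suff: forall j, (j <= m)%N -> exists j1 S1 j2 S2, [/\ (j <= j1 + j2)%N,
    strict_chain_below B1 j1 S1 (p1 (S j)) & strict_chain_below B2 j2 S2 (p2 (S j))].
  move=> /(_ m (leqnn m)) [j1 [S1 [j2 [S2 [lej [hS1 hst1 _] [hS2 hst2 _]]]]]].
  exact: leq_trans lej (leq_add (bnd1 _ _ hS1 hst1) (bnd2 _ _ hS2 hst2)).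
elim=> [_|j IH ltjm].
  exists 0%N, (fun _ => p1 (S 0%N)), 0%N, (fun _ => p2 (S 0%N)).
  by split=> //; split=> // i _; [apply: hB1|apply: hB2]; apply: hS.
have [j1 [S1 [j2 [S2 [lej c1 c2]]]]] := IH (ltnW ltjm).
have [BSj BSj1] := (hS j (ltnW ltjm), hS j.+1 ltjm).
have [sub [w [w1 w2]]] := hst j ltjm.
have [inc1 inc2] := (mono1 _ _ BSj BSj1 sub, mono2 _ _ BSj BSj1 sub).
case: (classic (exists y, p1 (S j.+1) y /\ ~ p1 (S j) y)) => [grow1|stay1].
  exists j1.+1, (fun i => if (i <= j1)%N then S1 i else p1 (S j.+1)), j2, S2.
  split; [by rewrite addSn|exact: strict_chain_below_grow (hB1 _ BSj1) inc1 grow1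
         |exact: strict_chain_below_weaken inc2].
case: (classic (exists y, p2 (S j.+1) y /\ ~ p2 (S j) y)) => [grow2|stay2].
  exists j1, S1, j2.+1, (fun i => if (i <= j2)%N then S2 i else p2 (S j.+1)).
  split; [by rewrite addnS|exact: strict_chain_below_weaken inc1
         |exact: strict_chain_below_grow (hB2 _ BSj1) inc2 grow2].
exfalso; apply: w2; apply: (reflect_eq _ _ BSj BSj1 sub) w1 => y p1y; apply: NNPP => hy;
  [apply: stay1|apply: stay2]; by exists y.
Qed.

Section SubmoduleLength.
Variables (R : pzRingType) (M : lmodType R).
Implicit Types (A H N : M -> Prop).

Definition submodule_in N A := is_submodule A /\ forall x, A x -> N x.

Definition finite_length_in N := exists n, chain_bounded (submodule_in N) n.

Definition addsub A H : M -> Prop := fun y => exists a h, [/\ A a, H h & y = a + h].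

Definition capsub A H : M -> Prop := fun y => A y /\ H y.

Definition cyclic_sub (u : M) : M -> Prop := fun z => exists c : R, z = c *: u.

Lemma submoduleN A x : is_submodule A -> A x -> A (- x).
Proof. by case=> _ _ hZ Ax; rewrite -scaleN1r; apply: hZ. Qed.

Lemma submoduleB A x y : is_submodule A -> A x -> A y -> A (x - y).
Proof. by move=> hA Ax Ay; case: (hA) => _ hD _; apply: hD => //; apply: submoduleN. Qed.

Lemma submodule_addsub A H : is_submodule A -> is_submodule H -> is_submodule (addsub A H).
Proof.
case=> A0 AD AZ [H0 HD HZ]; split.
- by exists 0, 0; rewrite addr0.
- move=> _ _ [a [h [Aa Hh ->]]] [a' [h' [Aa' Hh' ->]]].
  by exists (a + a'), (h + h'); rewrite addrACA; split; [apply: AD|apply: HD|].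
- move=> r _ [a [h [Aa Hh ->]]].
  by exists (r *: a), (r *: h); rewrite scalerDr; split; [apply: AZ|apply: HZ|].
Qed.

Lemma submodule_capsub A H : is_submodule A -> is_submodule H -> is_submodule (capsub A H).
Proof.
case=> A0 AD AZ [H0 HD HZ]; split=> //.
- by move=> x y [Ax Hx] [Ay Hy]; split; [apply: AD|apply: HD].
- by move=> r x [Ax Hx]; split; [apply: AZ|apply: HZ].
Qed.

Lemma submodule_cyclic u : is_submodule (cyclic_sub u).
Proof.
split; first by exists 0; rewrite scale0r.
  by move=> _ _ [a ->] [b ->]; exists (a + b); rewrite scalerDl.
by move=> r _ [a ->]; exists (r * a); rewrite scalerA.
Qed.

Lemma finite_length_in_zero N : (forall x, N x -> x = 0) -> finite_length_in N.
Proof.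
move=> N0; exists 0%N => -[//|m] S hS hst; exfalso.
have [_ [y [S1y S0y]]] := hst 0%N isT.
have [[S00 _ _] _] := hS 0%N isT.
by apply: S0y; rewrite (N0 y ((hS 1%N isT).2 y S1y)).
Qed.

Lemma finite_length_in_extension N H n :
  is_submodule N -> submodule_in N H -> finite_length_in H ->
  chain_bounded (fun A => [/\ is_submodule A, (forall x, H x -> A x) & forall x, A x -> N x]) n ->
  finite_length_in N.
Proof.
move=> hN [hH HN] [nH bndH] bnd; exists (nH + n)%N.
apply: (chain_bounded_split (p1 := fun A => capsub A H) (p2 := fun A => addsub A H) bndH bnd).
- by move=> A [hA _]; split; [apply: submodule_capsub|move=> x []].
- move=> A [hA AN]; split; first exact: submodule_addsub.
    by move=> x Hx; exists 0, x; rewrite add0r; split=> //; case: hA.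
  by move=> _ [a [h [Aa Hh ->]]]; case: hN => _ ND _; apply: ND; [apply: AN|apply: HN].
- by move=> A A' _ _ AA' y [Ay Hy]; split=> //; apply: AA'.
- by move=> A A' _ _ AA' _ [a [h [Aa Hh ->]]]; exists a, h; split=> //; apply: AA'.
- move=> A A' [hA _] [hA' _] AA' cap_eq add_eq x A'x.
  have [a [h [Aa Hh ex]]] : addsub A H x.
    by apply: add_eq; exists x, 0; rewrite addr0; split=> //; case: hH.
  have Ah : capsub A H h.
    by apply: cap_eq; split=> //; rewrite (_ : h = x - a); [apply: submoduleB => //; apply: AA'
                                                          |rewrite ex addrC addKr].
  by rewrite ex; case: hA => _ AD _; apply: AD => //; case: Ah.
Qed.

End SubmoduleLength.

Section ScaleKernelImage.
Variables (k : comPzRingType) (M : lmodType k) (N : M -> Prop) (c : k).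

Definition scale_kernel : M -> Prop := fun x => N x /\ c *: x = 0.

Definition scale_image : M -> Prop := fun y => exists x, N x /\ y = c *: x.

Lemma submodule_scale_kernel : is_submodule N -> is_submodule scale_kernel.
Proof.
case=> N0 ND NZ; split; first by rewrite /scale_kernel scaler0.
  move=> x y [Nx cx] [Ny cy]; split; first exact: ND.
  by rewrite scalerDr cx cy addr0.
move=> r x [Nx cx]; split; first exact: NZ.
by rewrite scalerA mulrC -scalerA cx scaler0.
Qed.

Lemma submodule_scale_image : is_submodule N -> is_submodule scale_image.
Proof.
case=> N0 ND NZ; split; first by exists 0; rewrite scaler0.
  by move=> _ _ [a [Na ->]] [b [Nb ->]]; exists (a + b); rewrite scalerDr; split=> //; apply: ND.
by move=> r _ [a [Na ->]]; exists (r *: a); rewrite !scalerA mulrC; split=> //; apply: NZ.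
Qed.

End ScaleKernelImage.

Lemma finite_length_in_scale (k : comPzRingType) (M : lmodType k) (N : M -> Prop) (c : k) :
  is_submodule N -> finite_length_in (scale_kernel N c) -> finite_length_in (scale_image N c) ->
  finite_length_in N.
Proof.
move=> hN [n1 bnd1] [n2 bnd2]; exists (n1 + n2)%N.
apply: (chain_bounded_split (p1 := fun A => capsub A (scale_kernel N c))
   (p2 := fun A => scale_image A c) bnd1 bnd2).
- move=> A [hA AN]; split; last by move=> x [].
  exact: submodule_capsub hA (submodule_scale_kernel c hN).
- move=> A [hA AN]; split; first exact: submodule_scale_image.
  by move=> _ [x [Ax ->]]; exists x; split=> //; apply: AN.
- by move=> A A' _ _ AA' y [Ay ?]; split=> //; apply: AA'.
- by move=> A A' _ _ AA' _ [x [Ax ->]]; exists x; split=> //; apply: AA'.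
- move=> A A' [hA _] [hA' A'N] AA' ker_eq im_eq x A'x.
  have [y [Ay cxy]] : exists y, A y /\ c *: x = c *: y by apply: im_eq; exists x.
  have [Axy _] : capsub A (scale_kernel N c) (x - y).
    apply: ker_eq; split; first by apply: submoduleB => //; apply: AA'.
    split; first by apply: submoduleB => //; apply: A'N => //; apply: AA'.
    by rewrite scalerBr cxy subrr.
  by rewrite -(subrK y x); case: hA => _ AD _; apply: AD.
Qed.

Lemma descending_chain_le (T : Type) (S : nat -> (T -> Prop)) :
  (forall n x, S n.+1 x -> S n x) -> forall m n, (m <= n)%N -> forall x, S n x -> S m x.
Proof.
move=> desc m n /subnKC <-; elim: (n - m)%N => [|d IH] x; first by rewrite addn0.
by rewrite addnS => /desc /IH.
Qed.

Definition dcc_in (R : pzRingType) (M : lmodType R) (N : M -> Prop) :=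
  forall S : nat -> (M -> Prop), (forall n, submodule_in N (S n)) ->
    (forall n x, S n.+1 x -> S n x) ->
    exists K, forall n, (K <= n)%N -> forall x, S K x -> S n x.

Definition span_prefix (R : pzRingType) (M : lmodType R) (w : nat -> M) (j : nat) : M -> Prop :=
  fun x => exists c : nat -> R, x = \sum_(i < j) c i *: w i.

Lemma submodule_span_prefix (R : pzRingType) (M : lmodType R) (w : nat -> M) j :
  is_submodule (span_prefix w j).
Proof.
split.
- by exists (fun _ => 0); rewrite big1 // => i _; rewrite scale0r.
- move=> _ _ [c ->] [d ->]; exists (fun i => c i + d i).
  by rewrite -big_split; apply: eq_bigr => i _; rewrite scalerDl.
- move=> a _ [c ->]; exists (fun i => a * c i).
  by rewrite scaler_sumr; apply: eq_bigr => i _; rewrite scalerA.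
Qed.

Section LeadingCoefficients.
Variables (k : comPzRingType) (M : lmodType k) (w : nat -> M) (j : nat).
Variable S : nat -> (M -> Prop).

Definition lead_coef_ideal (n : nat) : k -> Prop :=
  fun r => exists s m, [/\ S n s, span_prefix w j m & r *: w j = s + m].

Lemma is_ideal_lead_coef n : is_submodule (S n) -> is_ideal (lead_coef_ideal n).
Proof.
move=> [S0 SD SZ]; have [m0 mD mZ] := submodule_span_prefix w j; split.
- by exists 0, 0; rewrite scale0r addr0.
- move=> x y [s [m [Ss hm ex]]] [s' [m' [Ss' hm' ey]]].
  by exists (s + s'), (m + m'); rewrite scalerDl ex ey addrACA; split; [apply: SD|apply: mD|].
- move=> a x [s [m [Ss hm ex]]].
  by exists (a *: s), (a *: m); rewrite -scalerA ex scalerDr; split; [apply: SZ|apply: mZ|].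
Qed.

End LeadingCoefficients.

(* Induction on [j]: a descending chain stabilises once both its trace on the
   span of [w 0, ..., w (j-1)] and its ideal of coefficients of [w j] do. *)
Lemma dcc_in_span_prefix (k : comPzRingType) (M : lmodType k) (w : nat -> M) j :
  artinian_ring k -> dcc_in (span_prefix w j).
Proof.
move=> hk; elim: j => [|j IH] S hS desc.
  exists 0%N => n _ x S0x; have [[Sn0 _ _] _] := hS n.
  by have [c ->] := (hS 0%N).2 x S0x; rewrite big_ord0.
pose S' n := capsub (S n) (span_prefix w j).
have [K1 stab1] : exists K, forall n, (K <= n)%N -> forall x, S' K x -> S' n x.
  apply: IH; last by move=> n x [? ?]; split=> //; apply: desc.
  by move=> n; split; [apply: submodule_capsub; [case: (hS n)|apply: submodule_span_prefix]
                      |move=> x []].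
have descI : forall n x, lead_coef_ideal w j S n.+1 x -> lead_coef_ideal w j S n x.
  by move=> n x [s [m [Ss hm e]]]; exists s, m; split=> //; apply: desc.
have [K2 stab2] := hk _ (fun n => is_ideal_lead_coef w j (hS n).1) descI.
pose K := maxn K1 K2; exists K => n leKn x SKx.
have [c ex] := (hS K).2 x SKx; move: ex; rewrite big_ord_recr /=.
set m0 := \sum_(i < j) _; move=> ex.
have span_m0 : span_prefix w j m0 by exists c.
have [s [m [Sns hm es]]] : lead_coef_ideal w j S n (c j).
  apply: stab2; first exact: leq_trans (leq_maxr _ _) leKn.
  apply: (descending_chain_le descI (leq_maxr K1 K2)).
  exists x, (- m0); split=> //; first exact: submoduleN (submodule_span_prefix w j) span_m0.
  by rewrite ex addrAC subrr add0r.
have [Snxs _] : S' n (x - s).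
  apply: stab1; first exact: leq_trans (leq_maxl _ _) leKn.
  split.
    apply: (descending_chain_le desc (leq_maxl K1 K2)).
    by apply: submoduleB => //; [case: (hS K)|apply: (descending_chain_le desc leKn)].
  rewrite (_ : x - s = m0 + m); last by rewrite ex es addrCA [X in X - s]addrC addrK.
  by have [_ mD _] := submodule_span_prefix w j; apply: mD.
by rewrite -(subrK s x); have [[_ SD _] _] := hS n; apply: SD.
Qed.

Definition module_fin_gen (k : comPzRingType) (M : lmodType k) :=
  exists (n : nat) (v : 'I_n -> M), forall x : M,
    exists c : 'I_n -> k, x = \sum_(i < n) c i *: v i.

Lemma dcc_fin_gen (k : comPzRingType) (M : lmodType k) :
  artinian_ring k -> module_fin_gen M -> dcc_in (fun _ : M => True).
Proof.
move=> hk [n [v gen]] S hS; pose ext (T : Type) (f : 'I_n -> T) (t0 : T) (i : nat) :=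
  if (insub i : option 'I_n) is Some j then f j else t0.
apply: (@dcc_in_span_prefix k M (ext _ v 0) n hk) => p.
split=> [|x _]; first exact: (hS p).1.
have [c ->] := gen x; exists (ext _ c 0).
by apply: eq_bigr => i _; rewrite /ext valK.
Qed.

Lemma exists_minimal_not_finite_length (R : pzRingType) (M : lmodType R) :
  dcc_in (fun _ : M => True) -> ~ finite_length_in (fun _ : M => True) ->
  exists N : M -> Prop, [/\ is_submodule N, ~ finite_length_in N &
    forall A, is_submodule A -> strict_subset A N -> finite_length_in A].
Proof.
move=> dcc infT; apply: NNPP => no_min.
pose smaller (N A : M -> Prop) := [/\ is_submodule A, strict_subset A N & ~ finite_length_in A].
have step N : is_submodule N -> ~ finite_length_in N -> exists A, smaller N A.
  move=> hN infN; apply: NNPP => none; apply: no_min; exists N; split=> // A hA AN.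
  by apply: NNPP => infA; apply: none; exists A.
pose next N := epsilon (inhabits (fun _ : M => True)) (smaller N).
pose S n := iter n next (fun _ => True).
have spec N : is_submodule N -> ~ finite_length_in N -> smaller N (next N).
  by move=> hN infN; apply: epsilon_spec; apply: step.
have hS n : is_submodule (S n) /\ ~ finite_length_in (S n).
  by elim: n => [|n [hSn infSn]] //; case: (spec _ hSn infSn).
have desc n : strict_subset (S n.+1) (S n) by case: (spec _ (hS n).1 (hS n).2).
have [K stab] := dcc S (fun n => conj (hS n).1 (fun _ _ => I)) (fun n => (desc n).1).
by have [_ [x [SKx SK1x]]] := desc K; apply: SK1x; apply: stab.
Qed.

Lemma exists_maximal_submodule_avoiding (R : pzRingType) (M : lmodType R)
    (N : M -> Prop) (x0 : M) :
  is_submodule N -> x0 <> 0 ->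
  exists A, [/\ submodule_in N A, ~ A x0 &
    forall B, submodule_in N B -> ~ B x0 -> (forall x, A x -> B x) -> forall x, B x -> A x].
Proof.
move=> [N0 _ _] x0_neq0.
pose P (H : M -> Prop) := [/\ forall x, H x -> N x, ~ H x0,
   forall x y, H x -> H y -> H (x + y) & forall (a : R) x, H x -> H (a *: x)].
have [A [[AN Ax0 AD AZ] Amax]] : exists A, P A /\ forall B, classical_sets.proper A B -> ~ P B.
  apply: classical_sets.Zorn_bigcup => F FP Ftot; split.
  - by move=> x [X /FP [XN _ _ _] /XN].
  - by move=> [X /FP [_ Xx0 _ _]].
  - move=> x y [X FX Xx] [Y FY Yy].
    have [XY|YX] := Ftot X Y FX FY.
      by exists Y => //; have [_ _ YD _] := FP Y FY; apply: YD => //; apply: XY.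
    by exists X => //; have [_ _ XD _] := FP X FX; apply: XD => //; apply: YX.
  - by move=> a x [X FX Xx]; exists X => //; have [_ _ _ XZ] := FP X FX; apply: XZ.
have maxA B : P B -> (forall x, A x -> B x) -> forall x, B x -> A x.
  by move=> PB AB; apply: NNPP => BA; apply: Amax PB; split.
have A0 : A 0.
  have [[a Aa]|noA] := classic (exists a, A a); first by rewrite -(scale0r a); apply: AZ.
  apply: (maxA (fun y => y = 0)) => //; last by move=> x Ax; case: noA; exists x.
  split=> //; [by move=> _ ->|by move=> _ _ -> ->; rewrite addr0|by move=> a _ ->; rewrite scaler0].
by exists A; split=> // B [[_ BD BZ] BN] Bx0; apply: maxA.
Qed.

Section MinimalNotFiniteLength.
Variables (k : comPzRingType) (M : lmodType k) (N : M -> Prop).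
Hypotheses (k_artinian : artinian_ring k) (N_submodule : is_submodule N)
  (N_infinite : ~ finite_length_in N)
  (N_minimal : forall A, is_submodule A -> strict_subset A N -> finite_length_in A).

Definition annihilates (c : k) := forall x, N x -> c *: x = 0.

Definition scale_onto (c : k) := forall x, N x -> exists y, N y /\ x = c *: y.

Lemma exists_nonzero : exists x0, N x0 /\ x0 <> 0.
Proof.
apply: NNPP => none; apply: N_infinite; apply: finite_length_in_zero => x Nx.
by apply: NNPP => x_neq0; apply: none; exists x.
Qed.

Lemma scale_onto_not_annihilates c : scale_onto c -> ~ annihilates c.
Proof.
move=> onto ann; have [x0 [Nx0 x0_neq0]] := exists_nonzero.
by have [y [Ny ex0]] := onto x0 Nx0; apply: x0_neq0; rewrite ex0; apply: ann.
Qed.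

Lemma scale_onto_mul a b : scale_onto a -> scale_onto b -> scale_onto (a * b).
Proof.
move=> onto_a onto_b x Nx; have [y [Ny ->]] := onto_a x Nx.
by have [z [Nz ->]] := onto_b y Ny; exists z; rewrite scalerA.
Qed.

(* Kernel and image of [c] are submodules of [N]; were both proper, [N] would
   have finite length. *)
Lemma annihilates_or_scale_onto c : annihilates c \/ scale_onto c.
Proof.
apply: NNPP => neither; apply: N_infinite.
apply: (finite_length_in_scale (c := c) N_submodule); apply: N_minimal.
- exact: submodule_scale_kernel.
- split; first by move=> x [].
  apply: NNPP => all_ker; apply: neither; left => x Nx.
  by apply: NNPP => cx; apply: all_ker; exists x; split=> // -[_ /cx].
- exact: submodule_scale_image.
- split; first by move=> _ [x [Nx ->]]; case: N_submodule => _ _; apply.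
  apply: NNPP => all_im; apply: neither; right => x Nx.
  apply: NNPP => no_pre; apply: all_im; exists x.
  by split=> // -[y [Ny ey]]; apply: no_pre; exists y.
Qed.

(* The chain of ideals [c ^+ n * k + Ann N] stabilises, giving
   [c ^+ K * (1 - c * r)] in [Ann N] for some [r]. *)
Lemma scale_onto_inverse c : scale_onto c -> exists b : k, forall x, N x -> x = b *: (c *: x).
Proof.
move=> onto_c.
pose I n : k -> Prop := fun y => exists r p, annihilates p /\ y = c ^+ n * r + p.
have I_ideal n : is_ideal (I n).
  split; first by exists 0, 0; rewrite mulr0 addr0; split=> // x _; rewrite scale0r.
    move=> _ _ [r [p [ann_p ->]]] [r' [p' [ann_p' ->]]]; exists (r + r'), (p + p').
    by rewrite mulrDr addrACA; split=> // x Nx; rewrite scalerDl ann_p // ann_p' // addr0.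
  move=> a _ [r [p [ann_p ->]]]; exists (a * r), (a * p).
  by rewrite mulrDr mulrCA; split=> // x Nx; rewrite -scalerA ann_p // scaler0.
have I_desc n x : I n.+1 x -> I n x.
  by move=> [r [p [ann_p ->]]]; exists (c * r), p; rewrite exprS mulrCA mulrA.
have [K stab] := k_artinian I_ideal I_desc.
have [r [p [ann_p ecK]]] : I K.+1 (c ^+ K).
  by apply: stab => //; exists 1, 0; rewrite mulr1 addr0; split=> // x _; rewrite scale0r.
have onto_cK : scale_onto (c ^+ K).
  elim: K {stab ecK} => [|n IH]; last by rewrite exprS; apply: scale_onto_mul.
  by move=> x Nx; exists x; rewrite expr0 scale1r.
have ann_q : annihilates (1 - c * r).
  have [//|onto_q] := annihilates_or_scale_onto (1 - c * r).
  exfalso; apply: scale_onto_not_annihilates (scale_onto_mul onto_cK onto_q) _.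
  by rewrite mulrBr mulr1 mulrA -exprSr {1}ecK addrAC subrr add0r.
exists r => x Nx; apply/eqP; rewrite scalerA mulrC -subr_eq0 -{1}[x]scale1r -scalerBl.
by rewrite ann_q.
Qed.

Section Hyperplane.
Variables (x0 : M) (A : M -> Prop).
Hypotheses (Nx0 : N x0) (A_sub : submodule_in N A) (Ax0 : ~ A x0)
  (A_max : forall B, submodule_in N B -> ~ B x0 -> (forall x, A x -> B x) -> forall x, B x -> A x).

Lemma addsub_cyclic_full y : N y -> addsub A (cyclic_sub x0) y.
Proof.
move=> Ny; apply: NNPP => y_out; have [[A0 _ AZ] AN] := A_sub.
have B_sub : submodule_in N (addsub A (cyclic_sub y)).
  split; first exact: submodule_addsub A_sub.1 (submodule_cyclic y).
  move=> _ [a [_ [Aa [c ->] ->]]]; have [_ ND NZ] := N_submodule.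
  by apply: ND; [apply: AN|apply: NZ].
have Bx0 : ~ addsub A (cyclic_sub y) x0.
  move=> [a [_ [Aa [c ->] ex0]]].
  have [ann|onto] := annihilates_or_scale_onto c.
    by apply: Ax0; rewrite ex0 ann // addr0.
  have [b inv] := scale_onto_inverse onto.
  apply: y_out; exists (- (b *: a)), (b *: x0); split; [|by exists b|].
    by apply: submoduleN (A_sub.1) _; apply: AZ.
  by rewrite {1}(inv y Ny) ex0 scalerDr addKr.
have Ay : A y.
  apply: (A_max B_sub Bx0).
    by move=> x Ax; exists x, 0; rewrite addr0; split=> //; exists 0; rewrite scale0r.
  by exists 0, y; rewrite add0r; split=> //; exists 1; rewrite scale1r.
by apply: y_out; exists y, 0; rewrite addr0; split=> //; exists 0; rewrite scale0r.
Qed.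

Lemma chain_bounded_above_hyperplane :
  chain_bounded (fun S => [/\ is_submodule S, (forall x, A x -> S x) & forall x, S x -> N x]) 1.
Proof.
move=> [|[|m]] S hS hst //; exfalso.
have [_ [z [S1z S0z]]] := hst 0%N isT.
have [_ [t [S2t S1t]]] := hst 1%N isT.
have [hS1 A_S1 S1N] := hS 1%N isT.
have [_ S1D S1Z] := hS1.
have [_ A_S0 _] := hS 0%N isT.
have [_ _ S2N] := hS 2%N isT.
have S1x0 : S 1%N x0.
  have [a [_ [Aa [c ->] ez]]] := addsub_cyclic_full (S1N z S1z).
  have [ann|onto] := annihilates_or_scale_onto c.
    by case: S0z; rewrite ez ann // addr0; apply: A_S0.
  have [b inv] := scale_onto_inverse onto.
  rewrite (inv x0 Nx0) (_ : c *: x0 = z - a); last by rewrite ez addrAC subrr add0r.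
  by apply: S1Z; apply: submoduleB => //; apply: A_S1.
apply: S1t; have [a [_ [Aa [c ->] ->]]] := addsub_cyclic_full (S2N t S2t).
by apply: S1D; [apply: A_S1|apply: S1Z].
Qed.

End Hyperplane.

Lemma no_minimal_not_finite_length : False.
Proof.
have [x0 [Nx0 x0_neq0]] := exists_nonzero.
have [A [A_sub Ax0 A_max]] := exists_maximal_submodule_avoiding N_submodule x0_neq0.
have A_finite : finite_length_in A.
  by apply: N_minimal; [case: A_sub|split; [case: A_sub|exists x0]].
exact: N_infinite (finite_length_in_extension N_submodule A_sub A_finite
  (chain_bounded_above_hyperplane Nx0 A_sub Ax0 A_max)).
Qed.

End MinimalNotFiniteLength.

Lemma fin_gen_finite_length (k : comPzRingType) (M : lmodType k) :
  artinian_ring k -> module_fin_gen M -> finite_length_in (fun _ : M => True).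
Proof.
move=> k_artinian fin_gen; apply: NNPP => infM.
have [N [hN infN minN]] :=
  exists_minimal_not_finite_length (dcc_fin_gen k_artinian fin_gen) infM.
exact: no_minimal_not_finite_length k_artinian hN infN minN.
Qed.

(* Left ideals are [k]-submodules since [c *: x = (c *: 1) * x]. *)
Lemma artin_algebra_finite_length (k : comPzRingType) (L : algType k) :
  artin_algebra L -> finite_length L^o.
Proof.
move=> [k_artinian fin_gen]; have [n bnd] := fin_gen_finite_length k_artinian fin_gen.
exists n => m S hS hst; apply: bnd hst => i le_im; split=> //.
have [S0 SD SZ] := hS i le_im; split=> // c x Sx.
by rewrite -[x in c *: x]mul1r scalerAl; apply: (SZ (c *: 1 : L)).
Qed.

Definition scalev (R : pzRingType) (V : lmodType R) (y : V) : R^o -> V := fun a => (a : R) *: y.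

Lemma scalev_is_linear (R : pzRingType) (V : lmodType R) (y : V) : linear_for *:%R (scalev y).
Proof. by move=> a u v; rewrite /scalev scalerDl scalerA. Qed.

HB.instance Definition _ (R : pzRingType) (V : lmodType R) (y : V) :=
  GRing.isLinear.Build R R^o V *:%R (scalev y) (scalev_is_linear y).

Lemma regular_projective (R : pzRingType) : projective_mod R^o.
Proof.
move=> M N _ _ g h g_onto; have [m gm] := g_onto (h 1).
exists (scalev m) => p; rewrite /= /scalev linearZ /= gm -linearZ /=.
by congr (h _); rewrite /GRing.scale /= mulr1.
Qed.

Theorem proposition8p1 (k : comPzRingType) (L : algType k)
  (hL : artin_algebra L) (C X Y : lmodType L)
  (hC : finite_length C) (hX : finite_length X) (hY : finite_length Y)
  (f : {linear X -> Y}) (hf : right_determined C f) :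
  surjective_map f <->
  (forall u : {linear C -> Y}, factors_through_projective u ->
     factors_through u f).
Proof.
split.
- move=> f_onto u [P [a [b [_ P_proj ba]]]].
  have [l fl] := P_proj X Y hX hY f b f_onto.
  by exists (l \o a : {linear C -> X}) => c /=; rewrite fl ba.
- move=> lift_proj y.
  have L_finite := artin_algebra_finite_length hL.
  have [h fh] : exists h : {linear L^o -> X}, forall a, f (h a) = scalev y a.
    apply: (hf _ L_finite) => phi; apply: (lift_proj (scalev y \o phi : {linear C -> Y})).
    by exists L^o, phi, (scalev y); split; [|exact: regular_projective|].
  by exists (h 1); rewrite fh /scalev scale1r.
Qed.
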